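(* Fix a positive integer $n$, a nonzero $n$-partition $\lambda$ with $\lambda_n=0$, an $n$-semistandard tableau $T$ of shape $\lambda$, a column $1\le l<\lambda_1$ and a location $(j,i)>(l,1)$ in reading order. Then the scanning path $P(T;l,k)$ ($1\le k\le c_l$) that contains $(j,i)$ is the one whose most recent value relative to $(j,i)$ is the largest among those most recent values (over $1\le k\le c_l$) that are less than or equal to $T(j,i)$.
   Context: Identify $\lambda=(\lambda_1,\dots,\lambda_n)$ (weakly decreasing nonnegative integers, $\lambda_n=0$, $\lambda\ne0$) with its Young diagram; $c_j$ is the length of column $j$; $(j,i)$ is the box in column $j$, row $i$. Reading order: $(l,k)\le(j,i)$ iff $l<j$, or $l=j$ and $k\ge i$. An $n$-semistandard tableau $T$ of shape $\lambda$ has entries in $[n]$, weakly increasing along rows, strictly increasing down columns; $T(j,i)$ is its entry. The EWIS of a sequence $x_1,x_2,\dots$ is $x_{a_1},x_{a_2},\dots$ with $a_1=1$ and $a_b$ the smallest index $>a_{b-1}$ with $x_{a_b}\ge x_{a_{b-1}}$. Scanning paths: for each column $l$ and $k=c_l,c_l-1,\dots,1$ in turn, delete the boxes of the previously computed $P(T;l,k')$, $k'>k$ (leaving a semistandard tableau of valid shape); form the sequence of entries in the lowest box of each of columns $l,\dots,\lambda_1$ of the current shape (skipping empty columns); $P(T;l,k)$ is the set of locations of the terms of its EWIS. Every location $(a,b)\ge(l,c_l)$ lies in exactly one $P(T;l,k)$. For $(j,i)>(l,1)$, the most recent location of $P(T;l,k)$ relative to $(j,i)$ is the latest location (in reading order)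 of $P(T;l,k)$ strictly before $(j,i)$, and the most recent value is the entry of $T$ there. *)

From mathcomp Require Import all_boot all_order.
Set Implicit Arguments. Unset Strict Implicit. Unset Printing Implicit Defensive.

(* Locations are pairs (j, i) = (column, row), both 1-based. *)
Definition loc := (nat * nat)%type.

Definition part_entry (lam : seq nat) (i : nat) : nat := nth 0 lam i.-1.

Definition is_partition (n : nat) (lam : seq nat) : Prop :=
  [/\ size lam = n, sorted geq lam, part_entry lam n = 0 & lam != nseq n 0].

Definition in_shape (lam : seq nat) (x : loc) : bool :=
  [&& 0 < x.2, x.2 <= size lam, 0 < x.1 & x.1 <= part_entry lam x.2].

Definition col_len (lam : seq nat) (j : nat) : nat := count (fun x => j <= x) lam.

(* T j i is the entry T(j,i) in column j, row i *)
Definition semistandard (n : nat) (lam : seq nat) (T : nat -> nat -> nat) : Prop :=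
  [/\ (forall j i, in_shape lam (j, i) -> 1 <= T j i <= n),
      (forall j i, in_shape lam (j, i) -> in_shape lam (j.+1, i) -> T j i <= T j.+1 i)
    & (forall j i, in_shape lam (j, i) -> in_shape lam (j, i.+1) -> T j i < T j i.+1)].

Definition rle (x y : loc) : bool := (x.1 < y.1) || ((x.1 == y.1) && (y.2 <= x.2)).
Definition rlt (x y : loc) : bool := (x.1 < y.1) || ((x.1 == y.1) && (y.2 < x.2)).

Fixpoint ewis_from (A : Type) (f : A -> nat) (v : nat) (s : seq A) : seq A :=
  match s with
  | [::] => [::]
  | x :: s' => if v <= f x then x :: ewis_from f (f x) s' else ewis_from f v s'
  end.

Definition ewis (A : Type) (f : A -> nat) (s : seq A) : seq A :=
  match s with
  | [::] => [::]
  | x :: s' => x :: ewis_from f (f x) s'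
  end.

Definition Tloc (T : nat -> nat -> nat) (x : loc) : nat := T x.1 x.2.

(* row of the lowest remaining box of column a, after deleting the boxes in R
   (0 if the column has become empty) *)
Definition lowest_row (lam : seq nat) (R : seq loc) (a : nat) : nat :=
  \max_(1 <= b < (size lam).+1 | in_shape lam (a, b) && ((a, b) \notin R)) b.

Definition lowest_boxes (lam : seq nat) (R : seq loc) (l : nat) : seq loc :=
  [seq (a, lowest_row lam R a)
     | a <- iota l ((part_entry lam 1).+1 - l) & 0 < lowest_row lam R a].

Definition scan_step (lam : seq nat) (T : nat -> nat -> nat) (l : nat) (R : seq loc)
  : seq loc := ewis (Tloc T) (lowest_boxes lam R l).

(* boxes deleted after computing the first t paths P(T;l,c_l), ..., P(T;l,c_l-t+1) *)
Fixpoint scan_removed (lam : seq nat) (T : nat -> nat -> nat) (l t : nat) : seq loc :=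
  match t with
  | 0 => [::]
  | t'.+1 => let R := scan_removed lam T l t' in R ++ scan_step lam T l R
  end.

Definition scan_path (lam : seq nat) (T : nat -> nat -> nat) (l k : nat) : seq loc :=
  scan_step lam T l (scan_removed lam T l (col_len lam l - k)).

Definition rlast (d : loc) (s : seq loc) : loc :=
  foldl (fun acc y => if rle acc y then y else acc)
        (head d s) (behead s).

Definition most_recent_loc (P : seq loc) (x : loc) : loc :=
  rlast (0, 0) [seq y <- P | rlt y x].

Definition most_recent_val (lam : seq nat) (T : nat -> nat -> nat) (l k : nat) (x : loc)
  : nat := Tloc T (most_recent_loc (scan_path lam T l k) x).

(* Fix the column j of the box (j, i) and number the scanning paths of column l by the order
   t = c_l - k in which they are computed.  Path t arrives at column j with the value e t it
   last collected in columns l .. j-1, meets the lowest remaining box of column j in row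
   beta t, and takes it iff e t <= T(j, beta t), in which case beta drops by one.  By
   induction on j, e is strictly decreasing in t: in column l the paths start in rows
   c_l, c_l - 1, ..., and passing through a column preserves strict decrease.  The most
   recent value relative to (j, i) is T(j, beta t) if path t took a box below (j, i) and
   e t otherwise; it is strictly decreasing in t and exceeds T(j, i) for every path before
   the one that takes (j, i), which is therefore the one with the largest most recent value
   not exceeding T(j, i). *)

From mathcomp Require Import all_boot all_order zify.
Set Implicit Arguments. Unset Strict Implicit. Unset Printing Implicit Defensive.

Fixpoint ewis_level (A : Type) (f : A -> nat) (v : nat) (s : seq A) : nat :=
  match s with
  | [::] => v
  | x :: s' => if v <= f x then ewis_level f (f x) s' else ewis_level f v s'
  end.

Lemma ewisE (A : Type) (f : A -> nat) s : ewis f s = ewis_from f 0 s.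
Proof. by case: s. Qed.

Lemma ewis_from_cat (A : Type) (f : A -> nat) v s1 s2 :
  ewis_from f v (s1 ++ s2) = ewis_from f v s1 ++ ewis_from f (ewis_level f v s1) s2.
Proof. by elim: s1 v => [|x s1 IH] v //=; case: ifP => _; rewrite /= IH. Qed.

Lemma ewis_level_cat (A : Type) (f : A -> nat) v s1 s2 :
  ewis_level f v (s1 ++ s2) = ewis_level f (ewis_level f v s1) s2.
Proof. by elim: s1 v => [|x s1 IH] v //=; case: ifP. Qed.

Lemma ewis_from_subseq (A : eqType) (f : A -> nat) v s : subseq (ewis_from f v s) s.
Proof.
elim: s v => [|x s IH] v //=; case: ifP => _; first by rewrite eqxx.
exact: subseq_trans (IH v) (subseq_cons _ _).
Qed.

Lemma mem_ewis_from (A : eqType) (f : A -> nat) v s x : x \in ewis_from f v s -> x \in s.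
Proof. exact/mem_subseq/ewis_from_subseq. Qed.

Lemma ewis_from_last (A : Type) (f : A -> nat) v s x0 :
  f x0 = v -> f (last x0 (ewis_from f v s)) = ewis_level f v s.
Proof. by elim: s v x0 => [|x s IH] v x0 fx0 //=; case: ifP => _; apply: IH. Qed.

Lemma rlast_sorted d s : sorted (relpre fst ltn) s -> rlast d s = last d s.
Proof.
case: s => [|x s] //=; rewrite /rlast /=.
elim: s x => [|y s IH] x //= /andP[xy ys].
by rewrite /rle xy; apply: IH.
Qed.

Lemma bigmax_nat_prefix (P : pred nat) m N :
  P =1 (fun b => 0 < b <= m) -> m <= N -> \max_(1 <= b < N.+1 | P b) b = m.
Proof.
move=> PE mN; suff -> : \max_(1 <= b < N.+1 | P b) b = minn m N by apply/minn_idPl.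
elim: N {mN} => [|N IH]; first by rewrite big_geq // minn0.
rewrite big_mkcond big_nat_recr //= -big_mkcond IH PE; case: ifP => /=; lia.
Qed.

Lemma nth_geq_count (s : seq nat) a i : sorted geq s -> i < size s ->
  (a <= nth 0 s i) = (i < count (leq a) s).
Proof.
elim: s i => [|x s IH] i //= xs.
have s_le_x : all (geq x) s by apply: order_path_min xs => ? ? ? /= /[swap]; apply: leq_trans.
case: (leqP a x) => ax.
  by case: i => [|i] //= ?; rewrite add1n ltnS IH // (path_sorted xs).
have -> : count (leq a) s = 0.
  apply/eqP; rewrite -leqn0 leqNgt -has_count; apply/hasPn => y ys /=.
  by rewrite -ltnNge (leq_ltn_trans _ ax) //; apply: (allP s_le_x).
case: i => [|i] /= i_lt; first by rewrite leqNgt ax.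
by rewrite leqNgt (leq_ltn_trans _ ax) //; apply: (allP s_le_x); rewrite mem_nth.
Qed.

Lemma in_shapeE lam a b : sorted geq lam -> 0 < a ->
  in_shape lam (a, b) = (0 < b <= col_len lam a).
Proof.
move=> lam_sorted a_gt0; rewrite /in_shape /= a_gt0 /part_entry /col_len.
case: (posnP b) => [->|b_gt0] //=.
have := count_size (fun x => a <= x) lam.
case: (leqP b (size lam)) => bs /= cs; last by apply/esym/negbTE; rewrite -ltnNge; lia.
by rewrite nth_geq_count //; [rewrite prednK | lia].
Qed.

Lemma lowest_row_le_size lam R a : lowest_row lam R a <= size lam.
Proof.
rewrite /lowest_row big_nat_cond.
apply: (big_ind (leq^~ (size lam))) => [//|x y|b /andP[/andP[_ b_lt] _]].
  by rewrite geq_max => -> ->.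
by rewrite -ltnS.
Qed.

Lemma mem_lowest_boxes_row lam R l x :
  x \in lowest_boxes lam R l -> x.2 = lowest_row lam R x.1.
Proof. by case/mapP => a _ ->. Qed.

(* One column seen by the successive paths: path t arrives with value e t, the lowest
   remaining box of the column is in row beta t, and w lists the column entries. *)
Section ColumnPassage.
Variables (N : nat) (e beta w : nat -> nat).
Hypothesis e_decr : forall t, t.+1 < N -> e t.+1 < e t.
Hypothesis beta_succ : forall t,
  beta t.+1 = if (0 < beta t) && (e t <= w (beta t)) then (beta t).-1 else beta t.
Hypothesis w_incr : forall b b', 0 < b -> b < b' -> b' <= beta 0 -> w b < w b'.

Definition recent i t := if (i < beta t) && (e t <= w (beta t)) then w (beta t) else e t.

Lemma beta_nonincr : {homo beta : t t' / t <= t' >-> t' <= t}.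
Proof.
apply: (homo_leq (r := fun x y => y <= x)) => [//|y x z /= yx zy|t /=].
  exact: leq_trans zy yx.
by rewrite beta_succ; case: ifP => _ //; apply: leq_pred.
Qed.

Lemma beta_le0 t : beta t <= beta 0.
Proof. exact: beta_nonincr. Qed.

Lemma recent_decr i t : t.+1 < N -> recent i t.+1 < recent i t.
Proof.
move=> tN; have := e_decr tN; have := beta_le0 t; rewrite /recent beta_succ.
case: (boolP ((0 < beta t) && (e t <= w (beta t)))) => [/andP[b_gt0 ew]|not_taken] bt e_lt.
  case: (ltnP i (beta t)) => ib /=.
    rewrite ew; case: ifP => [/andP[ib' ew']|_]; last exact: leq_trans e_lt ew.
    by apply: w_incr bt; [exact: leq_ltn_trans ib' | rewrite ltn_predL].
  by have /negbTE-> : ~~ (i < (beta t).-1) by rewrite -leqNgt (leq_trans (leq_pred _) ib).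
have /negbTE-> : ~~ ((i < beta t) && (e t <= w (beta t))).
  by apply: contra not_taken => /andP[ib ->]; rewrite andbT (leq_ltn_trans _ ib).
case: ifP => [/andP[ib _]|_ //].
by move: not_taken; rewrite (leq_ltn_trans _ ib) //= -ltnNge.
Qed.

Lemma recent_strict i t t' : t < t' -> t' < N -> recent i t' < recent i t.
Proof.
move=> tt' t'N; have tN := ltn_trans tt' t'N.
apply: (homo_ltn_in (D := [pred s | s < N]) (f := recent i) (r := fun x y => y < x)
  _ _ _ tN t'N tt').
- by move=> x y z /= yx zy; apply: ltn_trans yx.
- by move=> x y _ /= yN z /andP[_ zy]; apply: ltn_trans yN.
- by move=> s _; apply: recent_decr.
Qed.

Lemma recent_at i t : beta t = i -> recent i t = e t.
Proof. by rewrite /recent => ->; rewrite ltnn. Qed.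

Lemma recent_above i t : 0 < i -> i < beta t -> w i < recent i t.
Proof.
move=> i_gt0 ib; rewrite /recent ib /=.
have wi : w i < w (beta t) by apply: w_incr (beta_le0 t).
by case: ifP => // /negbT; rewrite -ltnNge; apply: ltn_trans.
Qed.

Lemma recent_before_taken i t t' : 0 < i -> beta t = i -> t' < t -> w i < recent i t'.
Proof.
move=> i_gt0 bti t't; have := beta_nonincr (ltnW t't); rewrite bti.
case: (ltngtP i (beta t')) => [ib _|//|bi _]; first exact: recent_above.
rewrite recent_at // ltnNge; apply/negP => ew.
have : beta t <= beta t'.+1 by apply: beta_nonincr.
by rewrite beta_succ -bi i_gt0 ew bti /= leqNgt ltn_predL i_gt0.
Qed.

Lemma taken_before i t : 0 < i <= beta 0 -> beta t < i ->
  exists2 t', t' < t & beta t' = i /\ e t' <= w i.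
Proof.
move=> /andP[i_gt0 ib0]; elim: t => [|t IH] bti; first by rewrite ltnNge ib0 in bti.
case: (ltnP (beta t) i) => [lt|ge].
  by case: (IH lt) => t' t't taken; exists t' => //; apply: ltnW.
exists t => //; move: bti; rewrite beta_succ; case: ifP => [/andP[_ ew] lt|_]; last first.
  by rewrite ltnNge ge.
have bi : beta t = i by lia.
by rewrite -bi.
Qed.

Lemma recent_max_iff i t : 0 < i <= beta 0 -> t < N ->
  [&& 0 < beta t, beta t == i & e t <= w i] <->
  (recent i t <= w i /\
   forall t', t' < N -> recent i t' <= w i -> recent i t' <= recent i t).
Proof.
move=> i_bounds tN; have /andP[i_gt0 _] := i_bounds.
split => [/and3P[_ /eqP bti ew]|[rw rmax]].
  rewrite (recent_at bti); split => // t' t'N rw'.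
  case: (ltngtP t' t) => [t't|tt'|->]; last by rewrite (recent_at bti).
    by have := recent_before_taken i_gt0 bti t't; rewrite ltnNge rw'.
  by rewrite -(recent_at bti) ltnW ?recent_strict.
case: (ltngtP (beta t) i) => [bti|ibt|bti].
- have [t' t't [bt'i ew']] := taken_before i_bounds bti.
  have := rmax t' (ltn_trans t't tN); rewrite (recent_at bt'i) ew' leqNgt => /(_ isT).
  by rewrite -(recent_at bt'i) recent_strict.
- by have := recent_above i_gt0 ibt; rewrite ltnNge rw.
- by rewrite bti i_gt0 -(recent_at bti).
Qed.

End ColumnPassage.

Lemma semistandard_col_lt n lam T j b b' : semistandard n lam T -> sorted geq lam ->
  0 < j -> 0 < b -> b < b' -> b' <= col_len lam j -> T j b < T j b'.
Proof.
move=> [_ _ col_incr] lam_sorted j_gt0 b_gt0; elim: b' => [|b' IH] // bb' b'c.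
have shape_b' : in_shape lam (j, b') by rewrite in_shapeE //; lia.
have shape_b'1 : in_shape lam (j, b'.+1) by rewrite in_shapeE //; lia.
have {}col_incr := col_incr _ _ shape_b' shape_b'1.
rewrite ltnS leq_eqVlt in bb'; case/orP: bb' => [/eqP -> //|bb'].
by apply: ltn_trans col_incr; apply: IH => //; apply: ltnW.
Qed.

Section ScanningPaths.
Variables (lam : seq nat) (T : nat -> nat -> nat) (l : nat).
Hypothesis lam_sorted : sorted geq lam.
Hypothesis l_gt0 : 0 < l.

Definition low t a := lowest_row lam (scan_removed lam T l t) a.
Definition spath t := scan_step lam T l (scan_removed lam T l t).
Definition remaining t a b := in_shape lam (a, b) && ((a, b) \notin scan_removed lam T l t).

Lemma spath_subseq t : subseq (spath t) (lowest_boxes lam (scan_removed lam T l t) l).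
Proof. by rewrite /spath /scan_step ewisE; apply: ewis_from_subseq. Qed.

Lemma mem_spath_low t a b : (a, b) \in spath t -> b = low t a.
Proof. by move/(mem_subseq (spath_subseq t))/mem_lowest_boxes_row. Qed.

Lemma remaining_succ t a :
  (forall b, remaining t a b = (0 < b <= low t a)) ->
  forall b, remaining t.+1 a b =
    (0 < b <= if (a, low t a) \in spath t then (low t a).-1 else low t a).
Proof.
move=> rem_t b; rewrite /remaining /= mem_cat negb_or andbA -/(remaining t a b) rem_t.
case: ifP => [mem_low|not_mem]; case mem_b: ((a, b) \in spath t) => /=.
- by rewrite (mem_spath_low mem_b) andbF; lia.
- have b_ne : b != low t a by apply: contraFneq mem_b => ->.
  by rewrite andbT; lia.
- by rewrite -(mem_spath_low mem_b) mem_b in not_mem.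
- by rewrite andbT.
Qed.

Lemma low_eq t a m : (forall b, remaining t a b = (0 < b <= m)) -> m <= size lam ->
  low t a = m.
Proof. exact: bigmax_nat_prefix. Qed.

Lemma low_succ_of t a : (forall b, remaining t a b = (0 < b <= low t a)) ->
  low t.+1 a = if (a, low t a) \in spath t then (low t a).-1 else low t a.
Proof.
move=> rem_t; apply: low_eq (remaining_succ rem_t) _.
have := lowest_row_le_size lam (scan_removed lam T l t) a.
by case: ifP => _ //; apply: leq_trans (leq_pred _).
Qed.

Lemma remaining_low t a b : remaining t a b = (0 < b <= low t a).
Proof.
elim: t a b => [|t IH] a b; last by rewrite (remaining_succ (IH a)) -(low_succ_of (IH a)).
have rem0 b' : remaining 0 a b' = (0 < b' <= if 0 < a then col_len lam a else 0).
  rewrite /remaining /= andbT; case: (posnP a) => [->|a_gt0]; last exact: in_shapeE.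
  by rewrite /in_shape /= !andbF; lia.
by rewrite rem0 (low_eq rem0) //; case: ifP => _ //; apply: count_size.
Qed.

Lemma low_succ t a : low t.+1 a = if (a, low t a) \in spath t then (low t a).-1 else low t a.
Proof. exact/low_succ_of/remaining_low. Qed.

Lemma low0 a : 0 < a -> low 0 a = col_len lam a.
Proof.
move=> a_gt0; apply: low_eq; last exact: count_size.
by move=> b; rewrite /remaining andbT in_shapeE.
Qed.

Definition boxes_before t j := [seq (a, low t a) | a <- iota l (j - l) & 0 < low t a].
Definition box_at t j := [seq (a, low t a) | a <- [:: j] & 0 < low t a].
Definition boxes_after t j :=
  [seq (a, low t a) | a <- iota j.+1 (part_entry lam 1 - j) & 0 < low t a].
Definition arrival t j := ewis_level (Tloc T) 0 (boxes_before t j).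

Lemma lowest_boxes_split t j : l <= j <= part_entry lam 1 ->
  lowest_boxes lam (scan_removed lam T l t) l =
    boxes_before t j ++ box_at t j ++ boxes_after t j.
Proof.
move=> lj; rewrite /lowest_boxes -!map_cat -!filter_cat.
have -> : (part_entry lam 1).+1 - l = (j - l) + (part_entry lam 1 - j).+1 by lia.
by rewrite iotaD subnKC //; case/andP: lj.
Qed.

Lemma boxes_before_col t j x : x \in boxes_before t j -> l <= x.1 < j.
Proof. by case/mapP => a; rewrite mem_filter mem_iota => /andP[_ ?] -> /=; lia. Qed.

Lemma boxes_after_col t j x : x \in boxes_after t j -> j < x.1.
Proof. by case/mapP => a; rewrite mem_filter mem_iota => /andP[_ ?] -> /=; lia. Qed.

Lemma ewis_from_box_at t j v : ewis_from (Tloc T) v (box_at t j) =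
  if (0 < low t j) && (v <= T j (low t j)) then [:: (j, low t j)] else [::].
Proof. by rewrite /box_at /=; case: (0 < low t j) => //=; case: ifP. Qed.

Lemma ewis_level_box_at t j v : ewis_level (Tloc T) v (box_at t j) =
  if (0 < low t j) && (v <= T j (low t j)) then T j (low t j) else v.
Proof. by rewrite /box_at /=; case: (0 < low t j) => //=; case: ifP. Qed.

Lemma spath_split t j : l <= j <= part_entry lam 1 ->
  spath t = ewis_from (Tloc T) 0 (boxes_before t j)
            ++ ewis_from (Tloc T) (arrival t j) (box_at t j)
            ++ ewis_from (Tloc T) (ewis_level (Tloc T) (arrival t j) (box_at t j))
                 (boxes_after t j).
Proof. by move=> lj; rewrite /spath /scan_step ewisE (lowest_boxes_split t lj) !ewis_from_cat. Qed.

Lemma mem_spath t j i : l <= j <= part_entry lam 1 ->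
  ((j, i) \in spath t) = [&& 0 < low t j, low t j == i & arrival t j <= T j i].
Proof.
move=> lj; rewrite (spath_split t lj) !mem_cat ewis_from_box_at.
have /negbTE-> : (j, i) \notin ewis_from (Tloc T) 0 (boxes_before t j).
  by apply/negP => /mem_ewis_from/boxes_before_col /=; rewrite ltnn andbF.
have /negbTE-> : (j, i) \notin ewis_from (Tloc T) (ewis_level (Tloc T) (arrival t j) (box_at t j))
                                 (boxes_after t j).
  by apply/negP => /mem_ewis_from/boxes_after_col /=; rewrite ltnn.
rewrite orbF /=; case: (eqVneq (low t j) i) => [<-|low_ne].
  by case: ifP => taken; rewrite ?mem_seq1 ?eqxx ?taken.
by rewrite andbF; case: ifP => _ //; rewrite mem_seq1 xpair_eqE eqxx eq_sym (negbTE low_ne).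
Qed.

Lemma low_succ_col t j : l <= j <= part_entry lam 1 ->
  low t.+1 j =
    if (0 < low t j) && (arrival t j <= T j (low t j)) then (low t j).-1 else low t j.
Proof. by move=> lj; rewrite low_succ mem_spath // eqxx. Qed.

Lemma arrival_succ t j : l <= j ->
  arrival t j.+1 =
    if (0 < low t j) && (arrival t j <= T j (low t j)) then T j (low t j) else arrival t j.
Proof.
move=> lj; rewrite /arrival -ewis_level_box_at -ewis_level_cat /boxes_before /box_at.
rewrite -map_cat -filter_cat; have -> : j.+1 - l = (j - l) + 1 by lia.
by rewrite iotaD subnKC.
Qed.

Lemma arrival_at_start t : arrival t l = 0.
Proof. by rewrite /arrival /boxes_before subnn. Qed.

Lemma low_start t : l < part_entry lam 1 -> low t l = col_len lam l - t.
Proof.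
move=> l_lt; elim: t => [|t IH]; first by rewrite low0 // subn0.
rewrite low_succ_col; last by lia.
by rewrite arrival_at_start IH; case: ifP => taken; lia.
Qed.

Lemma sorted_spath t : sorted (relpre fst ltn) (spath t).
Proof.
have ltn_fst_trans : transitive (relpre (@fst nat nat) ltn) by move=> ? ? ?; apply: ltn_trans.
rewrite /spath /scan_step ewisE; apply: (subseq_sorted ltn_fst_trans (ewis_from_subseq _ _ _)).
by rewrite sorted_map; apply/sorted_filter/iota_ltn_sorted => ? ? ?; apply: ltn_trans.
Qed.

Lemma spath_before t j i : l <= j <= part_entry lam 1 ->
  [seq y <- spath t | rlt y (j, i)] =
  ewis_from (Tloc T) 0 (boxes_before t j)
  ++ (if (i < low t j) && (arrival t j <= T j (low t j)) then [:: (j, low t j)] else [::]).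
Proof.
move=> lj; rewrite (spath_split t lj) !filter_cat ewis_from_box_at.
have after_nil v : [seq y <- ewis_from (Tloc T) v (boxes_after t j) | rlt y (j, i)] = [::].
  apply/eqP; rewrite -size_eq0 size_filter -leqn0 leqNgt -has_count.
  apply/hasPn => x /mem_ewis_from/boxes_after_col jx.
  by rewrite /rlt ltnNge ltnW //= gtn_eqF.
rewrite after_nil cats0 (all_filterP _); last first.
  by apply/allP => x /mem_ewis_from/boxes_before_col /andP[_ xj]; rewrite /rlt xj.
congr (_ ++ _); case: (ltnP i (low t j)) => [i_lt|low_le].
  rewrite (leq_ltn_trans (leq0n i) i_lt) /=.
  by case: ifP => //= _; rewrite /rlt /= ltnn eqxx i_lt.
by case: ifP => //= _; rewrite /rlt /= ltnn eqxx ltnNge low_le.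
Qed.

Lemma last_boxes_before t j d : l < j -> 0 < low t l ->
  Tloc T (last d (ewis_from (Tloc T) 0 (boxes_before t j))) = arrival t j.
Proof.
move=> lj low_gt0; rewrite /arrival /boxes_before.
have -> : j - l = (j - l).-1.+1 by lia.
by rewrite /= low_gt0 /=; apply: ewis_from_last.
Qed.

Lemma most_recent_spath t j i : l < j <= part_entry lam 1 -> t < col_len lam l ->
  Tloc T (most_recent_loc (spath t) (j, i)) = recent (arrival^~ j) (low^~ j) (T j) i t.
Proof.
move=> lj t_lt; have lj' : l <= j <= part_entry lam 1 by lia.
rewrite /most_recent_loc rlast_sorted ?sorted_filter ?sorted_spath //; last first.
  by move=> ? ? ?; apply: ltn_trans.
rewrite spath_before // last_cat /recent.
case: ifP => _ //; apply: last_boxes_before; first by lia.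
by rewrite low_start; lia.
Qed.

Section Semistandard.
Variable n : nat.
Hypothesis T_ss : semistandard n lam T.

Lemma low_col_lt j b b' : 0 < j -> 0 < b -> b < b' -> b' <= low 0 j -> T j b < T j b'.
Proof. by move=> j_gt0; rewrite low0 //; apply: semistandard_col_lt T_ss lam_sorted j_gt0. Qed.

Lemma arrival_decr j t : l < part_entry lam 1 -> l < j <= part_entry lam 1 ->
  t.+1 < col_len lam l -> arrival t.+1 j < arrival t j.
Proof.
move=> l_lt; elim: j t => [|j IH] // t lj t_lt; rewrite !arrival_succ; try lia.
case: (eqVneq j l) => [->|j_ne].
  rewrite !arrival_at_start !low_start // !subn_gt0 t_lt (ltnW t_lt) leq0n /=.
  by apply: low_col_lt; rewrite ?low0; lia.
have lj' : l < j <= part_entry lam 1 by lia.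
have lj'' : l <= j <= part_entry lam 1 by lia.
have col_incr b b' : 0 < b -> b < b' -> b' <= low 0 j -> T j b < T j b'.
  by apply: low_col_lt; lia.
(* [recent _ _ _ 0 t] is exactly the value with which path t leaves column j. *)
by have := recent_decr (fun s => IH s lj') (fun s => low_succ_col s lj'') col_incr 0 t_lt.
Qed.

End Semistandard.
End ScanningPaths.

Unset Implicit Arguments.
Theorem lemma3p2 (n : nat) (lam : seq nat) (T : nat -> nat -> nat) (l j i : nat) :
  0 < n ->
  is_partition n lam ->
  semistandard n lam T ->
  1 <= l < part_entry lam 1 ->
  in_shape lam (j, i) ->
  rlt (l, 1) (j, i) ->
  forall k, 1 <= k <= col_len lam l ->
    ((j, i) \in scan_path lam T l k) <->
    (most_recent_val lam T l k (j, i) <= T j i /\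
     forall k', 1 <= k' <= col_len lam l ->
       most_recent_val lam T l k' (j, i) <= T j i ->
       most_recent_val lam T l k' (j, i) <= most_recent_val lam T l k (j, i)).
Proof.
move=> _ [_ lam_sorted _ _] T_ss /andP[l_gt0 l_lt] ji_shape l_before k /andP[k_gt0 k_le].
have j_gt0 : 0 < j by case/and4P: ji_shape.
have i_col : 0 < i <= col_len lam j by rewrite -in_shapeE.
have lj : l < j <= part_entry lam 1.
  have /and4P[_ _ _ j_le] : in_shape lam (j, 1) by rewrite in_shapeE //; lia.
  by move: l_before; rewrite /rlt /= j_le andbT => /orP[// | /andP[_ i_lt1]]; lia.
have i_bounds : 0 < i <= low lam T l 0 j by rewrite low0.
set c := col_len lam l.
have recent_eq k' : 1 <= k' <= c -> most_recent_val lam T l k' (j, i) =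
    recent (arrival lam T l ^~ j) (low lam T l ^~ j) (T j) i (c - k').
  by move=> k'_bounds; rewrite -most_recent_spath //; lia.
have arrival_lt t : t.+1 < c -> arrival lam T l t.+1 j < arrival lam T l t j.
  by move=> t_lt; apply: (arrival_decr lam_sorted l_gt0 T_ss l_lt lj t_lt).
have lj' : l <= j <= part_entry lam 1 by lia.
have low_next t := low_succ_col T lam_sorted l_gt0 t lj'.
have col_incr b b' : 0 < b -> b < b' -> b' <= low lam T l 0 j -> T j b < T j b'.
  exact: (low_col_lt lam_sorted T_ss j_gt0).
have k_lt : c - k < c by lia.
rewrite -[scan_path _ _ _ _]/(spath lam T l (c - k)) mem_spath //.
rewrite (recent_max_iff arrival_lt low_next col_incr i_bounds k_lt) recent_eq; last by lia.
split=> -[rw rmax]; split=> //.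
  by move=> k' k'_bounds; rewrite recent_eq //; apply: rmax; lia.
move=> t' t'_lt; have k'_bounds : 0 < c - t' <= c by lia.
by have := rmax _ k'_bounds; rewrite recent_eq // subKn // ltnW.
Qed.
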